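(* $\mathfrak{b}_{\mathrm{game}}^{\mathrm{II}} = \mathfrak{d}$, where $\mathfrak{d}$ is the dominating number.
   Context: For $x,y\in\omega^\omega$, $x\le^* y$ means $x(n)\le y(n)$ for all but finitely many $n$. $\mathfrak{d}$ is the least size of a family $\mathcal{A}\subseteq\omega^\omega$ such that every $x\in\omega^\omega$ satisfies $x\le^* y$ for some $y\in\mathcal{A}$. For $\mathcal{A}\subseteq\omega^\omega$, the bounding game with respect to $\mathcal{A}$ is the infinite two-player game in which, at round $k$, Player I plays $n_k\in\omega$ and then Player II plays $i_k\in\{0,1\}$. Player II wins iff $i_k=1$ for infinitely many $k$ and there is $g\in\mathcal{A}$ with $\{k\in\omega: i_k=1\}=\{k\in\omega: n_k<g(k)\}$. $\mathfrak{b}_{\mathrm{game}}^{\mathrm{II}}$ is the least $|\mathcal{A}|$ such that Player II has a winning strategy in the bounding game with respect to $\mathcal{A}$. *)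

From mathcomp Require Import all_boot.
Set Implicit Arguments. Unset Strict Implicit. Unset Printing Implicit Defensive.

Definition funfam := (nat -> nat) -> Prop.

Definition le_star (x y : nat -> nat) : Prop :=
  exists N, forall n, N <= n -> x n <= y n.

Definition dominating (A : funfam) : Prop :=
  forall x : nat -> nat, exists2 y, A y & le_star x y.

Definition card_le (B A : funfam) : Prop :=
  exists f : (nat -> nat) -> (nat -> nat),
    (forall g, B g -> A (f g)) /\
    (forall g h, B g -> B h -> f g = f h -> g = h).

(* A strategy for Player II: given Player I's moves n_0,...,n_k so far,
   answer i_k.  (II's own earlier moves are determined by the strategy, so
   this loses no generality.) *)
Definition strategyII := seq nat -> bool.

Definition answer (sigma : strategyII) (x : nat -> nat) (k : nat) : bool :=
  sigma (mkseq x k.+1).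

Definition winningII (A : funfam) (sigma : strategyII) : Prop :=
  forall x : nat -> nat,
    (forall m, exists2 k, m <= k & answer sigma x k) /\
    (exists2 g, A g & forall k, answer sigma x k = (x k < g k)).

Definition II_has_winning (A : funfam) : Prop := exists sigma, winningII A sigma.

From mathcomp Require Import all_boot.
From mathcomp Require Import boolp classical_sets.
From Stdlib Require Import ClassicalEpsilon.
Set Implicit Arguments. Unset Strict Implicit. Unset Printing Implicit Defensive.

(* Call B everywhere bounding if every x lies pointwise
   strictly below some member of B; against such a B, Player II wins by always
   answering 1.  From a dominating family A we build an everywhere bounding
   family of no larger size: by Zorn's lemma we find a dominating D together
   with an injection D x nat -> A (the absorption lemma, which replaces the
   cardinal identity |A x omega| = |A|), and lift every a in D by each
   constant c to k |-> max (a k) c + 1.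

   Fix a winning strategy sg of II.  From a position s,
   Player I can keep playing moves answered by 0 until he reaches a position
   where every move is answered by 1; this takes escape_time s rounds.  For
   g in B, the positions consistent with g (I plays below g at forced
   positions and escapes elsewhere) form a finitely branching tree, so
   bound g j, the sup of g (j + escape_time s) over consistent s of length j,
   is finite.  Given x, let I escape at unforced positions and play a prefix
   maximum of x at forced ones; the answer g of sg then satisfies
   x <= bound g everywhere, so {bound g | g in B} is dominating. *)

Definition prefix_max (x : nat -> nat) (n : nat) : nat := \max_(j < n) x j.

Lemma prefix_max_ge x n j : j < n -> x j <= prefix_max x n.
Proof. by move=> ltjn; rewrite /prefix_max (bigD1 (Ordinal ltjn)) //= leq_maxl. Qed.

Lemma card_le_image T (inhT : inhabited T) (S : set T) (f : T -> nat -> nat)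
    (A : funfam) (h : T -> nat -> nat) :
  (forall t, S t -> A (h t)) ->
  (forall t u, S t -> S u -> h t = h u -> t = u) ->
  card_le (f @` S)%classic A.
Proof.
move=> hA hinj.
pose pre g := epsilon inhT (fun t => S t /\ f t = g).
have preP g : (f @` S)%classic g -> S (pre g) /\ f (pre g) = g.
  by case=> t St ftg; apply: (epsilon_spec inhT (fun t => S t /\ f t = g)); exists t.
exists (h \o pre); split=> [g /preP[St _]|g g' /preP[St fg] /preP[St' fg'] eqh].
  exact: hA.
by rewrite -fg -fg' (hinj _ _ St St' eqh).
Qed.

Definition fun_inh : inhabited (nat -> nat) := inhabits (fun _ => 0).
Definition nat_inh : inhabited nat := inhabits 0.

Section Absorption.
Variables (A : funfam) (domA : dominating A).

Definition dominator (y : nat -> nat) : nat -> nat :=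
  epsilon fun_inh (fun a => A a /\ le_star y a).

Lemma dominatorP y : A (dominator y) /\ le_star y (dominator y).
Proof.
apply: (epsilon_spec fun_inh (fun a => A a /\ le_star y a)).
by have [a Aa le_ya] := domA y; exists a.
Qed.

(* climb x (i + 1) lies above climb x i and above its dominator; hence the
   dominators of the climb x i are pairwise distinct. *)
Fixpoint climb (x : nat -> nat) (i : nat) : nat -> nat :=
  if i is i'.+1 then fun k => maxn (climb x i' k) (dominator (climb x i') k).+1
  else x.

Lemma climb_mono x k : {homo (fun i => climb x i k) : i j / i <= j}.
Proof. by apply: homo_leq => [//|? ? ?|i]; [exact: leq_trans | exact: leq_maxl]. Qed.

Definition dom_seq (x : nat -> nat) (i : nat) : nat -> nat := dominator (climb x i).

Lemma dom_seqP x i : A (dom_seq x i) /\ le_star x (dom_seq x i).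
Proof.
have [Ae [N le_e]] := dominatorP (climb x i); split=> //.
by exists N => n /le_e; apply: leq_trans (climb_mono x n (leq0n i)).
Qed.

Lemma dom_seq_inj x : injective (dom_seq x).
Proof.
suff lt_neq i j : i < j -> dom_seq x i <> dom_seq x j.
  by move=> i j eij; case: (ltngtP i j) => // /lt_neq; rewrite eij.
move=> lt_ij eij; have [_ [N le_ej]] := dominatorP (climb x j).
have above_ei : dom_seq x i N < climb x i.+1 N := leq_maxr _ _.
have := leq_trans above_ei (leq_trans (climb_mono x N lt_ij) (le_ej N (leqnn N))).
by rewrite -/(dom_seq x j) -eij ltnn.
Qed.

(* A relation G on triples (a, n, b), read as a partial map (a, n) |-> b. *)
Definition triple := ((nat -> nat) * nat * (nat -> nat))%type.

Definition support (G : set triple) (a : nat -> nat) : Prop := exists n b, G (a, n, b).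

(* G is an injection from (support G) x nat into support G, and support G is
   included in A. *)
Definition absorbing (G : set triple) : Prop :=
  [/\ forall a n b b', G (a, n, b) -> G (a, n, b') -> b = b',
      forall a n b a' n', G (a, n, b) -> G (a', n', b) -> a = a' /\ n = n',
      forall a, support G a -> forall n, exists b, G (a, n, b)
    & forall a n b, G (a, n, b) -> A a /\ support G b].

Lemma absorbing_chain (F : set (set triple)) :
  (F `<=` absorbing)%classic -> total_on F subset ->
  absorbing (\bigcup_(G in F) G)%classic.
Proof.
move=> Fabs Ftot; set U := (\bigcup_(G in F) G)%classic.
have common t t' : U t -> U t' -> exists2 G, F G & G t /\ G t'.
  move=> [G FG Gt] [G' FG' G't']; case: (Ftot _ _ FG FG') => [GG'|G'G].
  - by exists G' => //; split=> //; exact: GG'.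
  - by exists G => //; split=> //; exact: G'G.
have suppU G a : F G -> support G a -> support U a.
  by move=> FG [n [b Gb]]; exists n, b, G.
split.
- move=> a n b b' Ub Ub'; have [G /Fabs[funG _ _ _] [Gb Gb']] := common _ _ Ub Ub'.
  exact: funG Gb Gb'.
- move=> a n b a' n' Ub Ub'; have [G /Fabs[_ injG _ _] [Gb Gb']] := common _ _ Ub Ub'.
  exact: injG Gb Gb'.
- move=> a [m [c [G FG Gc]]] n; have [_ _ totG _] := Fabs G FG.
  by have [b Gb] := totG a (ex_intro _ m (ex_intro _ c Gc)) n; exists b, G.
- move=> a n b [G FG Gb]; have [_ _ _ closedG] := Fabs G FG.
  by have [Aa suppb] := closedG _ _ _ Gb; split=> //; exact: suppU suppb.
Qed.

Definition pair_code (i n : nat) : nat := CodeSeq.code [:: i; n].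

Lemma pair_code_inj i n i' n' : pair_code i n = pair_code i' n' -> i = i' /\ n = n'.
Proof. by move/(can_inj CodeSeq.codeK) => [-> ->]. Qed.

(* If some x is not eventually dominated by support G, then G extends to a
   strictly larger absorbing relation: the members dom_seq x i lie outside
   support G, and (dom_seq x i, n) may be sent to dom_seq x (pair_code i n). *)
Lemma absorbing_extend G x :
  absorbing G -> (forall y, support G y -> ~ le_star x y) ->
  exists2 H, absorbing H & (G `<` H)%classic.
Proof.
move=> [funG injG totG closedG] nodom; set e := dom_seq x.
have eA i : A (e i) by have [] := dom_seqP x i.
have e_out i : ~ support G (e i) by move=> /nodom; have [_] := dom_seqP x i.
have suppl a n b : G (a, n, b) -> support G a by move=> Gb; exists n, b.
have suppr a n b : G (a, n, b) -> support G b by move=> /closedG[].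
pose New : set triple := fun '(a, n, b) => exists i, a = e i /\ b = e (pair_code i n).
have new_e i n : New (e i, n, e (pair_code i n)) by exists i.
exists (G `|` New)%classic; last first.
  split=> [t Gt|sub]; first by left.
  by apply: (e_out 0); apply: (suppl _ 0 (e (pair_code 0 0))); apply: sub; right.
split.
- move=> a n b b' [Gb|[i [-> ->]]] [Gb'|[j [ej ->]]].
  + exact: funG Gb Gb'.
  + by case: (e_out j); rewrite -ej; exact: suppl Gb.
  + by case: (e_out i); exact: suppl Gb'.
  + by rewrite (dom_seq_inj ej).
- move=> a n b a' n' [Gb|[i [-> ->]]] [Gb'|[j [-> ej]]].
  + exact: injG Gb Gb'.
  + by case: (e_out (pair_code j n')); rewrite -ej; exact: suppr Gb.
  + by case: (e_out (pair_code i n)); exact: suppr Gb'.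
  + by have [-> ->] := pair_code_inj (dom_seq_inj ej).
- move=> a [m [c [Gc|[i [-> _]]]]] n.
  + by have [b Gb] := totG a (suppl _ _ _ Gc) n; exists b; left.
  + by exists (e (pair_code i n)); right; exact: new_e.
- move=> a n b [Gb|[i [-> ->]]].
  + have [Aa [m [c Gc]]] := closedG _ _ _ Gb.
    by split=> //; exists m, c; left.
  + split; first exact: eA.
    exists 0, (e (pair_code (pair_code i n) 0)).
    by right; exact: new_e.
Qed.

(* A maximal absorbing relation has a dominating support. *)
Lemma absorb : exists (D : funfam) (io : (nat -> nat) -> nat -> nat -> nat),
  [/\ dominating D, forall a n, D a -> A (io a n) &
      forall a n a' n', D a -> D a' -> io a n = io a' n' -> a = a' /\ n = n'].
Proof.
have [G [absG maxG]] := Zorn_bigcup absorbing_chain.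
have [_ injG totG closedG] := absG.
pose io a n := epsilon fun_inh (fun b => G (a, n, b)).
have ioP a n : support G a -> G (a, n, io a n).
  by move=> /totG /(_ n) exb; exact: (epsilon_spec fun_inh (fun b => G (a, n, b))).
exists (support G), io; split.
- move=> x; apply: contrapT => nodom.
  have [H absH ltGH] : exists2 H, absorbing H & (G `<` H)%classic.
    apply: (absorbing_extend (x := x) absG) => y Gy le_xy.
    by apply: nodom; exists y.
  exact: maxG ltGH absH.
- by move=> a n /(ioP _ n) /closedG[_ [m [c /closedG[]]]].
- move=> a n a' n' /(ioP _ n) Gb /(ioP _ n') Gb' eqio.
  by rewrite eqio in Gb; exact: injG Gb Gb'.
Qed.

End Absorption.

Definition everywhere_bounding (B : funfam) : Prop :=
  forall x, exists2 g, B g & forall k, x k < g k.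

Lemma everywhere_bounding_winning B : everywhere_bounding B -> II_has_winning B.
Proof.
move=> bndB; exists (fun _ => true) => x; split=> [m|]; first by exists m.
by have [g Bg lt_xg] := bndB x; exists g => // k; rewrite lt_xg.
Qed.

Lemma dominating_everywhere_bounding A : dominating A ->
  exists2 B, everywhere_bounding B & card_le B A.
Proof.
move=> /absorb[D [io [domD ioA ioinj]]].
pose lift (p : (nat -> nat) * nat) k := (maxn (p.1 k) p.2).+1.
exists (lift @` [set p | D p.1])%classic.
- move=> x; have [a Da [N le_xa]] := domD x.
  exists (lift (a, prefix_max x N)); first by exists (a, prefix_max x N).
  move=> k; rewrite ltnS leq_max; case: (leqP N k) => [/le_xa -> //|ltkN].
  by rewrite prefix_max_ge ?orbT.
- apply: (@card_le_image _ (inhabits ((fun _ => 0), 0)) _ lift A (fun p => io p.1 p.2)).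
  + by move=> [a n] /= Da; exact: ioA.
  + by move=> [a n] [a' n'] /= Da Da' /(ioinj _ _ _ _ Da Da') [-> ->].
Qed.

Fixpoint extend (mv : seq nat -> nat) (s : seq nat) (i : nat) : seq nat :=
  if i is i'.+1 then rcons (extend mv s i') (mv (extend mv s i')) else s.

Lemma size_extend mv s i : size (extend mv s i) = size s + i.
Proof. by elim: i => [|i IH] /=; rewrite ?addn0 // size_rcons IH addnS. Qed.

Lemma nth_extend mv s i j k : i <= j -> k < size s + i ->
  nth 0 (extend mv s j) k = nth 0 (extend mv s i) k.
Proof.
move=> le_ij lt_k; elim: j le_ij => [|j IH]; first by rewrite leqn0 => /eqP ->.
rewrite leq_eqVlt => /orP[/eqP -> //|]; rewrite ltnS => le_ij /=.
rewrite nth_rcons size_extend (leq_trans lt_k) ?leq_add2l //; exact: IH.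
Qed.

Definition play (mv : seq nat -> nat) (s : seq nat) (k : nat) : nat :=
  nth 0 (extend mv s k.+1) k.

Lemma mkseq_play mv s i : mkseq (play mv s) (size s + i) = extend mv s i.
Proof.
apply: (@eq_from_nth _ 0); first by rewrite size_mkseq size_extend.
move=> k; rewrite size_mkseq => lt_k; rewrite nth_mkseq // /play.
case: (leqP k.+1 i) => [le_ki|lt_ik].
  by rewrite (nth_extend mv le_ki) //; exact: leq_addl.
by rewrite (nth_extend mv (ltnW lt_ik)).
Qed.

Lemma answer_play sg mv s i :
  answer sg (play mv s) (size s + i) = sg (rcons (extend mv s i) (mv (extend mv s i))).
Proof. by rewrite /answer -addnS mkseq_play. Qed.

Lemma play_nil mv k : play mv [::] k = mv (extend mv [::] k).
Proof. by rewrite /play /= nth_rcons size_extend add0n ltnn eqxx. Qed.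

Section Strategy.
Variable sg : strategyII.
Hypothesis sg_infinitely_often : forall x m, exists2 k, m <= k & answer sg x k.

Definition forced (s : seq nat) : Prop := forall n, sg (rcons s n).

Definition escape (s : seq nat) : nat :=
  epsilon nat_inh (fun n => sg (rcons s n) = false).

Lemma escapeP s : ~ forced s -> sg (rcons s (escape s)) = false.
Proof.
move=> nforced; apply: (epsilon_spec nat_inh (fun n => sg (rcons s n) = false)).
apply: contrapT => none; apply: nforced => n; apply: contrapT => /negP/negbTE sg0.
by apply: none; exists n.
Qed.

Definition first_forced (s : seq nat) (i : nat) : Prop :=
  forced (extend escape s i) /\ forall j, forced (extend escape s j) -> i <= j.

Definition escape_time (s : seq nat) : nat := epsilon nat_inh (first_forced s).

(* Escaping forever would make II answer 0 forever; so a forced position is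
   eventually reached. *)
Lemma escape_timeP s : first_forced s (escape_time s).
Proof.
apply: (epsilon_spec nat_inh (first_forced s)).
pose p i := `[< forced (extend escape s i) >].
have ex_p : exists i, p i.
  apply: contrapT => never; have [k le_sk] := sg_infinitely_often (play escape s) (size s).
  rewrite -(subnKC le_sk) answer_play escapeP //.
  by move/asboolP => forced_k; apply: never; exists (k - size s).
case: (ex_minnP ex_p) => m /asboolP forced_m min_m.
by exists m; split=> // j /asboolP; exact: min_m.
Qed.

(* Positions reachable by I when II answers according to g: below g at
   forced positions, escaping elsewhere. *)
Inductive consistent (g : nat -> nat) : seq nat -> Prop :=
| consistent_nil : consistent g [::]
| consistent_forced s n : consistent g s -> forced s -> n < g (size s) ->
    consistent g (rcons s n)
| consistent_escape s : consistent g s -> ~ forced s ->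
    consistent g (rcons s (escape s)).

(* There are finitely many consistent positions of each length, so every F
   is bounded on them. *)
Lemma consistent_bounded g (F : seq nat -> nat) j :
  exists b, forall s, consistent g s -> size s = j -> F s <= b.
Proof.
elim: j F => [|j IH] F; first by exists (F [::]) => s _ /size0nil ->.
pose F' s := maxn (\max_(n < g (size s)) F (rcons s (nat_of_ord n)))
                  (F (rcons s (escape s))).
have [b le_F'b] := IH F'; exists b => _ [|s n cs _ lt_n|s cs _]; rewrite ?size_rcons //.
- case=> /(le_F'b _ cs); apply: leq_trans; apply: leq_trans (leq_maxl _ _).
  by rewrite (bigD1 (Ordinal lt_n)) //= leq_maxl.
- by case=> /(le_F'b _ cs); apply: leq_trans; exact: leq_maxr.
Qed.

Definition bound (g : nat -> nat) (j : nat) : nat :=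
  epsilon nat_inh (fun b => forall s, consistent g s -> size s = j ->
    g (size s + escape_time s) <= b).

Lemma boundP g j s : consistent g s -> size s = j ->
  g (size s + escape_time s) <= bound g j.
Proof.
apply: (epsilon_spec nat_inh (fun b => forall s, consistent g s -> size s = j ->
  g (size s + escape_time s) <= b)).
exact: consistent_bounded.
Qed.

Definition chase (x : nat -> nat) (s : seq nat) : nat :=
  if `[< forced s >] then prefix_max x (size s).+1 else escape s.

Section Chase.
Variables (x g : nat -> nat).
Let pos := extend (chase x) [::].
Hypothesis g_answers : forall k,
  answer sg (play (chase x) [::]) k = (play (chase x) [::] k < g k).

Lemma size_pos k : size (pos k) = k.
Proof. by rewrite size_extend. Qed.

Lemma chase_answer k : sg (rcons (pos k) (chase x (pos k))) = (chase x (pos k) < g k).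
Proof. by have := answer_play sg (chase x) [::] k; rewrite add0n g_answers play_nil => <-. Qed.

Lemma chase_consistent k : consistent g (pos k).
Proof.
elim: k => [|k IH]; first exact: consistent_nil.
rewrite /pos /= -/(pos k); case: (asboolP (forced (pos k))) => [fk|nfk].
- apply: consistent_forced => //; rewrite size_pos -chase_answer; exact: fk.
- by rewrite /chase (asboolF nfk); exact: consistent_escape.
Qed.

Lemma chase_escapes j i :
  i <= escape_time (pos j) -> pos (j + i) = extend escape (pos j) i.
Proof.
elim: i => [|i IH] le_i; first by rewrite addn0.
rewrite addnS /pos /= -/(pos (j + i)) IH ?(ltnW le_i) // /chase asboolF //.
by have [_ min_esc] := escape_timeP (pos j) => /min_esc; rewrite leqNgt le_i.
Qed.

(* At the forced position reached from round j, the prefix maximum of x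
   exceeds x j and is below g, which is below bound g j. *)
Lemma chase_bound j : x j <= bound g j.
Proof.
set s := pos j; have [forced_s _] := escape_timeP s.
have pos_esc : pos (j + escape_time s) = extend escape s (escape_time s).
  exact: chase_escapes.
have lt_g : chase x (pos (j + escape_time s)) < g (j + escape_time s).
  by rewrite -chase_answer pos_esc; exact: forced_s.
move: lt_g; rewrite /chase pos_esc asboolT // -pos_esc size_pos => lt_g.
apply: leq_trans (ltnW (leq_trans lt_g _)); first exact: prefix_max_ge (leq_addr _ _).
by rewrite -(size_pos j); exact: boundP (chase_consistent j) _.
Qed.

End Chase.

End Strategy.

Lemma winning_dominating B : II_has_winning B -> exists2 A, dominating A & card_le A B.
Proof.
move=> [sg win].
have sg_inf x m : exists2 k, m <= k & answer sg x k by have [] := win x.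
exists (bound sg @` B)%classic.
- move=> x; have [_ [g Bg g_answers]] := win (play (chase sg x) [::]).
  exists (bound sg g); first by exists g.
  by exists 0 => j _; exact: (chase_bound sg_inf g_answers j).
- exact: (@card_le_image _ fun_inh B (bound sg) B id).
Qed.

Theorem mainTheorem2 :
  (forall A : funfam, dominating A ->
     exists2 B : funfam, II_has_winning B & card_le B A) /\
  (forall B : funfam, II_has_winning B ->
     exists2 A : funfam, dominating A & card_le A B).
Proof.
split; last exact: winning_dominating.
move=> A /dominating_everywhere_bounding[B bndB le_BA].
by exists B => //; exact: everywhere_bounding_winning.
Qed.
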